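(* The relation $\mathrm{Step}^{(p)}$ (par-steps of the algorithm BFS) is well-founded: there is no infinite sequence of configurations $\gamma_0,\gamma_1,\dots$ with $\gamma_i\xrightarrow{\mathrm{Step}^{(p)}}\gamma_{i+1}$ for all $i$.
   Context: Let $G$ be a finite, connected, undirected graph with node set $V$ and a distinguished node $r$ (the root). Each node $p$ has a fixed ordered list $N(p)$ of its neighbours. A configuration $\gamma$ assigns to each node $p$ a value $\gamma.p.d\in\mathbb N$ and a neighbour $\gamma.p.par\in N(p)$. For a non-root node $p$ let $Dist_p(\gamma)=\min\{\gamma.q.d+1 : q\in N(p)\}$. Algorithm BFS (Dolev et al.) has the following actions. Root: enabled iff $\gamma.r.d\neq 0$; executing it sets $r.d:=0$. Non-root $p$, action CD: enabled iff $\gamma.p.d\ne Dist_p(\gamma)$; executing sets $p.d:=Dist_p(\gamma)$. Non-root $p$, action CP: enabled iff $\gamma.p.d=Dist_p(\gamma)$ and $\gamma.q_0.d+1\neq\gamma.p.d$ where $q_0=\gamma.p.par$; executing sets $p.par$ to the first $q$ in the list $N(p)$ with $\gamma.q.d+1=\gamma.p.d$. A node is enabled if one of its actions is enabled (at most one is). A step $\gamma\to\gamma'$ (relation $\mathrm{Step}$, unfair daemon) holds iff there is a nonempty set $S$ of nodes enabled in $\gamma$ such that $\gamma'$ is obtained by every $p\in S$ simultaneously executing its enabled action (guards and right-hand sides evaluated in $\gamma$), all other nodes keeping their values. $\mathrm{Step}^{(p)}$ is the set of steps $\gamma\to\gamma'$ with $\gamma'.p.d=\gamma.p.d$ for all nodes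 $p$. A relation is well-founded if it admits no infinite forward chain $x_0 R x_1 R x_2\cdots$. *)

From mathcomp Require Import all_boot.
Set Implicit Arguments. Unset Strict Implicit. Unset Printing Implicit Defensive.

Section BFS.
Variables (V : finType) (N : V -> seq V) (r : V).

Definition bfs_graph : Prop :=
  [/\ forall p q, (q \in N p) = (p \in N q),
      forall p, p \notin N p,
      forall p, uniq (N p)
    & forall p q, connect (grel N) p q].

Record config := Config { cd : V -> nat; cpar : V -> V }.

Definition valid (g : config) : Prop := forall p, cpar g p \in N p.

(* Dist_p(g) = min { g.q.d + 1 : q in N(p) }  (N p is nonempty for non-root
   nodes of a connected graph with >= 2 nodes; default 0 never used). *)
Definition Dist (g : config) (p : V) : nat :=
  match N p with
  | [::] => 0
  | q0 :: s => foldr (fun q m => minn (cd g q).+1 m) (cd g q0).+1 s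
  end.

Definition enabled (g : config) (p : V) : bool :=
  if p == r then cd g r != 0
  else (cd g p != Dist g p) || ((cd g (cpar g p)).+1 != cd g p).

Definition first_par (g : config) (p : V) : V :=
  nth p (N p) (find (fun q => (cd g q).+1 == cd g p) (N p)).

Definition exec (g : config) (p : V) : nat * V :=
  if p == r then (0, cpar g p)
  else if cd g p != Dist g p then (Dist g p, cpar g p)   (* action CD *)
  else (cd g p, first_par g p).                            (* action CP *)

(* Step relation (unfair distributed daemon) between configurations *)
Definition Step (g g' : config) : Prop :=
  valid g /\ valid g' /\
  exists S : {set V}, [/\ S != set0,
    (forall p, p \in S -> enabled g p) &
    (forall p, (cd g' p, cpar g' p) =
               if p \in S then exec g p else (cd g p, cpar g p))].

Definition Step_par (g g' : config) : Prop :=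
  Step g g' /\ forall p, cd g' p = cd g p.

End BFS.

Definition wf_fwd (T : Type) (R : T -> T -> Prop) : Prop :=
  ~ exists f : nat -> T, forall i, R (f i) (f i.+1).

(* Along a Step_par no d-value changes, hence no Dist-value changes either.
   So a root or CD move is impossible (it would change a d-value), every
   moving node performs CP and is disabled afterwards (its new parent q
   satisfies q.d + 1 = p.d = Dist_p), and a node that does not move keeps
   its enabledness.  The set of enabled nodes therefore shrinks strictly
   at each step, so no infinite chain exists; no assumption on the graph
   is needed. *)
From mathcomp Require Import all_boot.
Set Implicit Arguments. Unset Strict Implicit. Unset Printing Implicit Defensive.

Lemma wf_fwd_measure (T : Type) (R : T -> T -> Prop) (m : T -> nat) :
  (forall x y, R x y -> m y < m x) -> wf_fwd R.
Proof.
move=> decr [f Rf].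
have bound i : m (f i) + i <= m (f 0).
  elim: i => [|i IH]; first by rewrite addn0.
  by apply: leq_trans IH; rewrite addnS ltn_add2r decr.
by have := bound (m (f 0)).+1; rewrite addnS ltnNge leq_addl.
Qed.

Lemma foldr_minS_mem (T : eqType) (f : T -> nat) (x0 : T) (s : seq T) :
  exists2 q, q \in x0 :: s &
    foldr (fun q m => minn (f q).+1 m) (f x0).+1 s = (f q).+1.
Proof.
elim: s => [|y s [q q_in IH]] /=; first by exists x0; rewrite ?inE.
rewrite IH; case: leqP => _.
- by exists y; rewrite // !inE eqxx orbT.
- by exists q; move: q_in; rewrite // !inE => /orP [->|->]; rewrite ?orbT.
Qed.

Section ParSteps.
Variables (V : finType) (N : V -> seq V) (r : V).

Lemma Dist_mem (g : config V) (p : V) :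
  N p != [::] -> exists2 q, q \in N p & Dist N g p = (cd g q).+1.
Proof. by rewrite /Dist; case: (N p) => // q0 s _; apply: foldr_minS_mem. Qed.

Lemma eq_Dist (g g' : config V) (p : V) :
  cd g' =1 cd g -> Dist N g' p = Dist N g p.
Proof.
move=> eq_d; rewrite /Dist; case: (N p) => [|q0 s] //.
by rewrite eq_d; elim: s => //= y s ->; rewrite eq_d.
Qed.

Lemma first_parE (g : config V) (p : V) :
  N p != [::] -> cd g p = Dist N g p -> (cd g (first_par N g p)).+1 = cd g p.
Proof.
move=> /(Dist_mem g) [q q_in Dq] dp; apply/eqP.
apply: (nth_find p (a := fun q => (cd g q).+1 == cd g p)).
by apply/hasP; exists q; rewrite // dp Dq.
Qed.

Variables (g g' : config V).
Hypothesis eq_d : cd g' =1 cd g.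

Lemma exec_disabled (p : V) :
  valid N g -> enabled N r g p -> (cd g' p, cpar g' p) = exec N r g p ->
  ~~ enabled N r g' p.
Proof.
rewrite /enabled /exec => valid_g; case: (p =P r) => [-> | _] /=.
  by rewrite -(eq_d r) => + [->].
case: ifP => [/negP CD _ [dp _] | /negbFE/eqP CP _ [_ ->]].
  by rewrite -eq_d dp in CD.
have N_n0 : N p != [::] by move: (valid_g p); case: (N p).
by rewrite (eq_Dist _ eq_d) !eq_d -CP eqxx /= first_parE ?eqxx.
Qed.

Lemma idle_enabled (p : V) :
  cpar g' p = cpar g p -> enabled N r g' p = enabled N r g p.
Proof. by move=> par_p; rewrite /enabled (eq_Dist _ eq_d) !eq_d par_p. Qed.

End ParSteps.

Lemma Step_par_enabled_proper (V : finType) (N : V -> seq V) (r : V)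
    (g g' : config V) :
  Step_par N r g g' ->
  [set p | enabled N r g' p] \proper [set p | enabled N r g p].
Proof.
case=> -[valid_g [_ [S [S_n0 S_en S_exec]]]] eq_d.
have moved_disabled p : p \in S -> ~~ enabled N r g' p.
  by move=> pS; apply: exec_disabled (S_en p pS) _; rewrite // S_exec pS.
apply/properP; split.
  apply/subsetP => p; rewrite !inE.
  case pS: (p \in S); first by move/negP: (moved_disabled p pS).
  by have := S_exec p; rewrite pS => -[_ /(idle_enabled N r eq_d) ->].
have [p pS] := set0Pn _ S_n0.
by exists p; rewrite !inE; [apply: S_en | apply: moved_disabled].
Qed.

Theorem lemma1 (V : finType) (N : V -> seq V) (r : V) :
  bfs_graph N -> wf_fwd (Step_par N r).
Proof.
move=> _; apply: (wf_fwd_measure (m := fun g => #|[set p | enabled N r g p]|)).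
by move=> g g' step; apply/proper_card/Step_par_enabled_proper.
Qed.
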